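(* Let $\mathcal{S}$ be the set of non-uniformly stable matchings in $G$, let $\equiv$ be the relation on $\mathcal{S}$ with $\mu\equiv\sigma$ iff $\mu(v)\sim_v\sigma(v)$ for every $v\in V_1$, let $\mathbb{C}$ be the set of its equivalence classes and $\langle\mu\rangle$ the class of $\mu$. Then the operations $\langle\mu\rangle\wedge_\equiv\langle\sigma\rangle:=\langle\mu\wedge\sigma\rangle$ and $\langle\mu\rangle\vee_\equiv\langle\sigma\rangle:=\langle\mu\vee\sigma\rangle$ are well-defined on $\mathbb{C}$, and $(\mathbb{C},\wedge_\equiv,\vee_\equiv)$ is a distributive lattice (i.e., both operations are idempotent, commutative and associative, satisfy the absorption laws, and each distributes over the other).
   Context: Setting: $G=(V,E)$ is a finite simple bipartite graph with $V=V_1\sqcup V_2$, every edge joining a vertex of $V_1$ to a vertex of $V_2$; an edge is identified with the set of its two endpoints. $E$ is partitioned into $E_1,E_2$. For $F\subseteq E$ and $v\in V$, $F(v)$ is the set of edges of $F$ incident to $v$. For every $v\in V$ there is a transitive and complete binary relation $\succsim_v$ on $E(v)\cup\{\emptyset\}$ with $e\succsim_v\emptyset$ and $\emptyset\not\succsim_v e$ for all $e\in E(v)$; $e\succ_v f$ means $e\succsim_v f$ and $f\not\succsim_v e$; $e\sim_v f$ means both $e\succsim_v f$ and $f\succsim_v e$. A matching is $\mu\subseteq E$ with $|\mu(v)|\le1$ for all $v$; $\mu(v)$ denotes the edge of $\mu$ at $v$, or $\emptyset$. An edge $e\in E\setminus\mu$ weakly blocks $\mu$ if $e\succsim_v\mu(v)$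 for every $v\in e$; it strongly blocks $\mu$ if additionally $e\succ_w\mu(w)$ for some $w\in e$. $\mu$ is non-uniformly stable if no edge of $E_1\setminus\mu$ weakly blocks $\mu$ and no edge of $E_2\setminus\mu$ strongly blocks $\mu$. For non-uniformly stable $\mu,\sigma$, define for each $v\in V_1$: $(\mu\wedge\sigma)(v)=\mu(v)$ if $\mu(v)\succsim_v\sigma(v)$ and $=\sigma(v)$ if $\sigma(v)\succ_v\mu(v)$; $(\mu\vee\sigma)(v)=\mu(v)$ if $\sigma(v)\succsim_v\mu(v)$ and $=\sigma(v)$ if $\mu(v)\succ_v\sigma(v)$; $\mu\wedge\sigma$ and $\mu\vee\sigma$ are the corresponding edge sets $\{(\mu\odot\sigma)(v):v\in V_1\}\setminus\{\emptyset\}$, which are non-uniformly stable matchings. *)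

From mathcomp Require Import all_boot.
Set Implicit Arguments. Unset Strict Implicit. Unset Printing Implicit Defensive.

Section NUStable.
Variable V : finType.

(* Conventions:
   - V2 is the complement of V1 in V.
   - an edge is a 2-element subset of V; E : {set {set V}}.
   - E2 := E :\: E1.
   - the "empty" option ∅ is None; an edge e is Some e.
   - pref v x y  means  x ≿_v y. *)

Definition edges_at (F : {set {set V}}) (v : V) : {set {set V}} :=
  [set e in F | v \in e].

Definition bipartite_graph (V1 : {set V}) (E : {set {set V}}) : Prop :=
  forall e, e \in E -> exists x y, [/\ x \in V1, y \notin V1 & e = [set x; y]].

Definition pref_dom (E : {set {set V}}) (v : V) (x : option {set V}) : bool :=
  if x is Some e then e \in edges_at E v else true.

Definition valid_prefs (E : {set {set V}}) (pref : V -> rel (option {set V})) : Prop :=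
  forall v,
  [/\ (forall x y z, pref_dom E v x -> pref_dom E v y -> pref_dom E v z ->
         pref v x y -> pref v y z -> pref v x z),
      (forall x y, pref_dom E v x -> pref_dom E v y -> pref v x y || pref v y x)
    & (forall e, e \in edges_at E v -> pref v (Some e) None && ~~ pref v None (Some e))].

Definition valid_instance (V1 : {set V}) (E E1 : {set {set V}})
  (pref : V -> rel (option {set V})) : Prop :=
  [/\ bipartite_graph V1 E, E1 \subset E & valid_prefs E pref].

Definition strict_pref (pref : V -> rel (option {set V})) (v : V) (x y : option {set V}) :=
  pref v x y && ~~ pref v y x.

Definition is_matching (E mu : {set {set V}}) : Prop :=
  mu \subset E /\ forall v, #|edges_at mu v| <= 1.

Definition mate (mu : {set {set V}}) (v : V) : option {set V} :=
  [pick e in mu | v \in e].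

Definition weakly_blocks(pref : V -> rel (option {set V})) (mu : {set {set V}}) (e : {set V}) : Prop :=
  e \notin mu /\ forall v, v \in e -> pref v (Some e) (mate mu v).

Definition strongly_blocks(pref : V -> rel (option {set V})) (mu : {set {set V}}) (e : {set V}) : Prop :=
  weakly_blocks pref mu e /\ exists2 w, w \in e & strict_pref pref w (Some e) (mate mu w).

Definition nu_stable (E E1 : {set {set V}})(pref : V -> rel (option {set V})) (mu : {set {set V}}) : Prop :=
  [/\ is_matching E mu,
      (forall e, e \in E1 -> ~ weakly_blocks pref mu e)
    & (forall e, e \in E :\: E1 -> ~ strongly_blocks pref mu e)].

Definition meet_at(pref : V -> rel (option {set V})) (mu sigma : {set {set V}}) (v : V) : option {set V} :=
  if pref v (mate mu v) (mate sigma v) then mate mu v else mate sigma v.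

Definition join_at(pref : V -> rel (option {set V})) (mu sigma : {set {set V}}) (v : V) : option {set V} :=
  if pref v (mate sigma v) (mate mu v) then mate mu v else mate sigma v.

Definition nu_meet (V1 : {set V})(pref : V -> rel (option {set V})) (mu sigma : {set {set V}}) : {set {set V}} :=
  [set e : {set V} | [exists v in V1, meet_at pref mu sigma v == Some e]].

Definition nu_join (V1 : {set V})(pref : V -> rel (option {set V})) (mu sigma : {set {set V}}) : {set {set V}} :=
  [set e : {set V} | [exists v in V1, join_at pref mu sigma v == Some e]].

Definition nu_equiv (V1 : {set V})(pref : V -> rel (option {set V})) (mu sigma : {set {set V}}) : Prop :=
  forall v, v \in V1 ->
    pref v (mate mu v) (mate sigma v) /\ pref v (mate sigma v) (mate mu v).

End NUStable.

From mathcomp Require Import all_boot.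
Set Implicit Arguments. Unset Strict Implicit. Unset Printing Implicit Defensive.

(* For v in V1 the mate of mu /\ sigma at v is the preferred of mu(v) and
   sigma(v), and the mate of mu \/ sigma the less preferred one.  In a total
   preorder, x |-> {z | x >= z} sends the larger of two elements to the union
   and the smaller to the intersection of their down-sets, so all lattice laws
   hold up to ~_v, i.e. up to the equivalence of matchings.

   Stability of mu /\ sigma: two vertices of V1 cannot pick distinct edges at a
   common w in V2 (w would then prefer each of them strictly and weakly to the
   other); the choice dominates mu and sigma on V1, hence, counting matched
   vertices on both sides (rural hospitals), every w in V2 keeps its mu- or its
   sigma-mate, and an edge blocking mu /\ sigma would block mu or sigma.
   Finally mu \/ sigma is the meet of mu and sigma computed from the V2 side, so
   its stability follows by symmetry. *)

Section TotalPreorder.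
Variables (T : Type) (r : rel T) (D : pred T).

Definition pmax a b := if r a b then a else b.
Definition pmin a b := if r b a then a else b.
Definition peq a b := r a b && r b a.

Lemma pmax_either a b : pmax a b = a \/ pmax a b = b.
Proof. by rewrite /pmax; case: ifP; auto. Qed.

Lemma pmin_either a b : pmin a b = a \/ pmin a b = b.
Proof. by rewrite /pmin; case: ifP; auto. Qed.

Hypothesis r_trans : forall x y z, D x -> D y -> D z -> r x y -> r y z -> r x z.
Hypothesis r_total : forall x y, D x -> D y -> r x y || r y x.

Lemma r_refl x : D x -> r x x.
Proof. by move=> Dx; have := r_total Dx Dx; rewrite orbb. Qed.

Lemma r_totalN x y : D x -> D y -> ~~ r x y -> r y x.
Proof. by move=> Dx Dy /negbTE rxy; have := r_total Dx Dy; rewrite rxy. Qed.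

Lemma D_pmax a b : D a -> D b -> D (pmax a b).
Proof. by rewrite /pmax; case: ifP. Qed.

Lemma D_pmin a b : D a -> D b -> D (pmin a b).
Proof. by rewrite /pmin; case: ifP. Qed.

Lemma r_pmax a b z : D a -> D b -> D z -> r (pmax a b) z = r a z || r b z.
Proof.
move=> Da Db Dz; rewrite /pmax; case: ifP => rab; apply/idP/orP => [|[]]; auto.
  by move=> rbz; apply: r_trans rab rbz.
by move=> raz; apply: r_trans (r_totalN Da Db (negbT rab)) raz.
Qed.

Lemma r_pmin a b z : D a -> D b -> D z -> r (pmin a b) z = r a z && r b z.
Proof.
move=> Da Db Dz; rewrite /pmin; case: ifP => rba; apply/idP/andP => [|[]//].
  by move=> raz; split=> //; apply: r_trans rba raz.
by move=> rbz; split=> //; apply: r_trans (r_totalN Db Da (negbT rba)) rbz.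
Qed.

Lemma pmax_ge a b : D a -> D b -> r (pmax a b) a && r (pmax a b) b.
Proof. by move=> Da Db; rewrite !r_pmax // !r_refl ?orbT. Qed.

Lemma peq_of_r x y : D x -> D y -> (forall z, D z -> r x z = r y z) -> peq x y.
Proof. by move=> Dx Dy rxy; rewrite /peq rxy ?r_refl // -rxy ?r_refl. Qed.

Lemma r_peq x y z : D x -> D y -> D z -> peq x y -> r x z = r y z.
Proof.
move=> Dx Dy Dz /andP[rxy ryx].
by apply/idP/idP; [apply: r_trans ryx | apply: r_trans rxy].
Qed.

Ltac D_closed := repeat first [assumption | apply: D_pmax | apply: D_pmin].
Ltac compare_down_sets :=
  apply: peq_of_r => [||z Dz]; [D_closed | D_closed | rewrite !(r_pmax, r_pmin); try D_closed].

Variables (a b c : T).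
Hypotheses (Da : D a) (Db : D b) (Dc : D c).

Lemma pmaxxx : peq (pmax a a) a.
Proof. by compare_down_sets; rewrite orbb. Qed.

Lemma pminxx : peq (pmin a a) a.
Proof. by compare_down_sets; rewrite andbb. Qed.

Lemma pmaxC : peq (pmax a b) (pmax b a).
Proof. by compare_down_sets; rewrite orbC. Qed.

Lemma pminC : peq (pmin a b) (pmin b a).
Proof. by compare_down_sets; rewrite andbC. Qed.

Lemma pmaxA : peq (pmax a (pmax b c)) (pmax (pmax a b) c).
Proof. by compare_down_sets; rewrite orbA. Qed.

Lemma pminA : peq (pmin a (pmin b c)) (pmin (pmin a b) c).
Proof. by compare_down_sets; rewrite andbA. Qed.

Lemma pmax_pminK : peq (pmax a (pmin a b)) a.
Proof. by compare_down_sets; case: (r a z). Qed.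

Lemma pmin_pmaxK : peq (pmin a (pmax a b)) a.
Proof. by compare_down_sets; case: (r a z). Qed.

Lemma pmax_pminr : peq (pmax a (pmin b c)) (pmin (pmax a b) (pmax a c)).
Proof. by compare_down_sets; rewrite orb_andr. Qed.

Lemma pmin_pmaxr : peq (pmin a (pmax b c)) (pmax (pmin a b) (pmin a c)).
Proof. by compare_down_sets; rewrite andb_orr. Qed.

Variables (a' b' : T).
Hypotheses (Da' : D a') (Db' : D b') (eqa : peq a a') (eqb : peq b b').

Lemma pmax_peq : peq (pmax a b) (pmax a' b').
Proof. by compare_down_sets; rewrite (r_peq Da Da' Dz eqa) (r_peq Db Db' Dz eqb). Qed.

Lemma pmin_peq : peq (pmin a b) (pmin a' b').
Proof. by compare_down_sets; rewrite (r_peq Da Da' Dz eqa) (r_peq Db Db' Dz eqb). Qed.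

End TotalPreorder.

Section NUStableLattice.
Variables (V : finType) (E E1 : {set {set V}}) (pref : V -> rel (option {set V})).

Local Notation stable := (nu_stable E E1 pref).
Local Notation dom v := (pref_dom E v).
Implicit Types (t A B K : {set {set V}}) (e : {set V}) (v w : V).

Definition matched (t : {set {set V}}) (X : {set V}) := [set x in X | mate t x != None].

Definition chosen_edges (V1 : {set V}) (c : V -> option {set V}) :=
  [set e : {set V} | [exists v in V1, c v == Some e]].

Lemma nu_meetE V1 A B :
  nu_meet V1 pref A B = chosen_edges V1 (fun v => pmax (pref v) (mate A v) (mate B v)).
Proof. by []. Qed.

Lemma nu_joinE V1 A B :
  nu_join V1 pref A B = chosen_edges V1 (fun v => pmin (pref v) (mate A v) (mate B v)).
Proof. by []. Qed.

Lemma mate_Some t v e : mate t v = Some e -> e \in t /\ v \in e.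
Proof. by rewrite /mate; case: pickP => // e' /andP[e't ve'] [<-]. Qed.

Lemma mate_matching t e v : is_matching E t -> e \in t -> v \in e -> mate t v = Some e.
Proof.
move=> [_ t1] et ve; rewrite /mate; case: pickP => [e' /andP[e't ve']|/(_ e)].
  by congr Some; apply: (card_le1_eqP (t1 v)); rewrite inE ?e't ?et.
by rewrite et ve.
Qed.

Lemma matching_edges_eq t e e' w :
  is_matching E t -> e \in t -> e' \in t -> w \in e -> w \in e' -> e = e'.
Proof.
move=> tm et e't we we'.
by move: (mate_matching tm et we); rewrite (mate_matching tm e't we') => -[].
Qed.

Lemma dom_edge v e : e \in E -> v \in e -> dom v (Some e).
Proof. by move=> eE ve; rewrite /= inE eE ve. Qed.

Lemma dom_mate t v : t \subset E -> dom v (mate t v).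
Proof.
case h: (mate t v) => [e|] // tE; have [et ve] := mate_Some h.
exact: dom_edge (subsetP tE e et) ve.
Qed.

Lemma stable_matching t : stable t -> is_matching E t.
Proof. by case. Qed.

Lemma stable_sub t : stable t -> t \subset E.
Proof. by case=> [[]]. Qed.

Section Side.
Variable V1 : {set V}.
Hypothesis inst : valid_instance V1 E E1 pref.

Lemma edge_shape e : e \in E -> exists v w, [/\ v \in V1, w \notin V1 & e = [set v; w]].
Proof. by case: inst => + _ _; apply. Qed.

Lemma edge_pair e v w :
  e \in E -> v \in V1 -> w \notin V1 -> v \in e -> w \in e -> e = [set v; w].
Proof.
move=> /edge_shape[a [b [aV1 bV1 ->]]] vV1 wV1 /set2P[->|vb] /set2P[wa|->] //.
- by move: wV1; rewrite wa aV1.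
- by move: vV1; rewrite vb (negbTE bV1).
- by move: vV1; rewrite vb (negbTE bV1).
Qed.

Lemma edge_V1_endpoint e : e \in E -> exists2 v, v \in V1 & v \in e.
Proof. by move=> /edge_shape[v [w [vV1 _ ->]]]; exists v; rewrite ?set21. Qed.

Lemma edge_V1_uniq e x y : e \in E -> x \in V1 -> y \in V1 -> x \in e -> y \in e -> x = y.
Proof.
move=> /edge_shape[a [b [_ bV1 ->]]] xV1 yV1 /set2P[->|xb] /set2P[->|yb] //.
- by move: yV1; rewrite yb (negbTE bV1).
- by move: xV1; rewrite xb (negbTE bV1).
- by move: xV1; rewrite xb (negbTE bV1).
Qed.

Lemma pref_trans v x y z :
  dom v x -> dom v y -> dom v z -> pref v x y -> pref v y z -> pref v x z.
Proof. by case: inst => _ _ /(_ v)[+ _ _]; apply. Qed.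

Lemma pref_total v x y : dom v x -> dom v y -> pref v x y || pref v y x.
Proof. by case: inst => _ _ /(_ v)[_ + _]; apply. Qed.

Lemma pref_None v x : dom v x -> pref v None x -> x = None.
Proof.
case: x => [e|] // /= ev; case: inst => _ _ /(_ v)[_ _ /(_ e ev)/andP[_]].
by move/negbTE->.
Qed.

Lemma pref_totalN v x y : dom v x -> dom v y -> ~~ pref v x y -> pref v y x.
Proof. exact: (r_totalN (@pref_total v)). Qed.

Lemma stable_weakly_blocks t e :
  stable t -> e \in E -> weakly_blocks pref t e ->
  {in e, forall z, pref z (mate t z) (Some e)}.
Proof.
move=> [_ nw ns] eE wb z ze; apply/negPn/negP => nz.
case: (boolP (e \in E1)) => [/nw //|eE1].
apply: (ns e); first by rewrite inE eE1 eE.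
by split=> //; exists z => //; rewrite /strict_pref nz andbT; apply: wb.2.
Qed.

Lemma stable_pref_edge t e x y : stable t -> e \in E -> e \notin t -> e = [set x; y] ->
  pref x (Some e) (mate t x) -> pref y (mate t y) (Some e).
Proof.
move=> st eE et ee px; apply/negPn/negP => ny.
have tE := stable_sub st; have ye : y \in e by rewrite ee set22.
have py := pref_totalN (dom_mate y tE) (dom_edge eE ye) ny.
have wb : weakly_blocks pref t e by split=> // z; rewrite {1}ee => /set2P[]->.
by move: ny; rewrite (stable_weakly_blocks st eE wb).
Qed.

Lemma stable_strict_pref_edge t e x y : stable t -> e \in E -> e \notin t -> e = [set x; y] ->
  strict_pref pref x (Some e) (mate t x) -> strict_pref pref y (mate t y) (Some e).
Proof.
move=> st eE et ee /andP[px npx].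
rewrite /strict_pref (stable_pref_edge st eE et ee px) /=; apply/negP => py.
have wb : weakly_blocks pref t e by split=> // z; rewrite {1}ee => /set2P[]->.
by move: npx; rewrite (stable_weakly_blocks st eE wb) // ee set21.
Qed.

Lemma stable_matched_end t e x y : stable t -> e \in E -> e = [set x; y] ->
  pref x (Some e) (mate t x) -> mate t y != None.
Proof.
move=> st eE ee px; have ye : y \in e by rewrite ee set22.
case: (boolP (e \in t)) => et; first by rewrite (mate_matching (stable_matching st) et ye).
move: (stable_pref_edge st eE et ee px); case: (mate t y) => // /pref_None.
by move/(_ (dom_edge eE ye)).
Qed.

(* An edge blocking K would also block the dominated matching t. *)
Lemma nu_stable_dominating K : is_matching E K ->
  (forall e, e \in E -> e \notin K -> exists2 t, stable t &
     e \notin t /\ {in e, forall z, pref z (mate K z) (mate t z)}) ->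
  stable K.
Proof.
move=> Km Kdom; have KE := Km.1.
have blocks_dominated e : e \in E -> weakly_blocks pref K e -> exists2 t, stable t &
    weakly_blocks pref t e /\ {in e, forall z, pref z (mate K z) (mate t z)}.
  move=> eE [eK wb]; have [t st [et Kt]] := Kdom e eE eK.
  exists t => //; split=> //; split=> // z ze; have tE := stable_sub st.
  exact: pref_trans (dom_edge eE ze) (dom_mate z KE) (dom_mate z tE) (wb z ze) (Kt z ze).
have E1E : E1 \subset E by case: inst.
split=> // e.
  move=> eE1 /(blocks_dominated e (subsetP E1E e eE1))[t [_ nw _] [wb _]].
  exact: nw eE1 wb.
move=> eE2 [wbK [z ze /andP[_ npz]]].
have eE : e \in E by move: eE2; rewrite inE => /andP[].
have [t st [wbt Kt]] := blocks_dominated e eE wbK.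
case: st => tm _ /(_ e eE2); apply; split=> //; exists z => //.
rewrite /strict_pref wbt.2 //=; apply: contra npz.
exact: pref_trans (dom_mate z KE) (dom_mate z tm.1) (dom_edge eE ze) (Kt z ze).
Qed.

Section Choice.
Variables (A B : {set {set V}}) (c : V -> option {set V}).
Hypothesis c_mate : forall u, c u = mate A u \/ c u = mate B u.

Lemma chosen_edgesP e : reflect (exists2 u, u \in V1 & c u = Some e) (e \in chosen_edges V1 c).
Proof.
rewrite inE; apply: (iffP existsP) => [[u /andP[uV1 /eqP]]|[u uV1 cu]]; first by exists u.
by exists u; rewrite uV1 cu eqxx.
Qed.

Lemma chosen_edge u e : c u = Some e -> u \in e /\ (e \in A \/ e \in B).
Proof. by case: (c_mate u) => -> /mate_Some[]; auto. Qed.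

Hypotheses (AE : A \subset E) (BE : B \subset E).

Lemma chosen_edges_sub : chosen_edges V1 c \subset E.
Proof.
apply/subsetP => e /chosen_edgesP[u _ /chosen_edge[_ [eA|eB]]].
  exact: subsetP AE e eA.
exact: subsetP BE e eB.
Qed.

Lemma card_chosen_edges : #|chosen_edges V1 c| <= #|matched A V1 :|: matched B V1|.
Proof.
apply: leq_trans (leq_imset_card (fun v => odflt set0 (c v)) _).
apply: subset_leq_card; apply/subsetP => e /chosen_edgesP[u uV1 cu].
apply/imsetP; exists u; last by rewrite cu.
by rewrite !inE uV1; case: (c_mate u) => <-; rewrite cu ?orbT.
Qed.

Lemma mate_chosen_edges v : v \in V1 -> mate (chosen_edges V1 c) v = c v.
Proof.
move=> vV1; rewrite /mate; case: pickP => [e /andP[eN ve]|none].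
  have /chosen_edgesP[u uV1 cu] := eN; have [ue _] := chosen_edge cu.
  have eE := subsetP chosen_edges_sub e eN.
  by rewrite -(edge_V1_uniq eE uV1 vV1 ue ve) cu.
case cv: (c v) => [e|] //; have [ve _] := chosen_edge cv.
have eN : e \in chosen_edges V1 c by apply/chosen_edgesP; exists v.
by move: (none e); rewrite /= eN ve.
Qed.

Lemma chosen_edges_matching :
  (forall u u' e e' w, u \in V1 -> u' \in V1 -> w \notin V1 ->
     c u = Some e -> c u' = Some e' -> w \in e -> w \in e' -> e = e') ->
  is_matching E (chosen_edges V1 c).
Proof.
move=> V2_uniq; split; first exact: chosen_edges_sub.
move=> x; apply/card_le1_eqP => e' e /setIdP[e'N xe'] /setIdP[eN xe].
have /chosen_edgesP[u uV1 cu] := eN; have /chosen_edgesP[u' u'V1 cu'] := e'N.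
case: (boolP (x \in V1)) => xV1; last exact: (V2_uniq _ _ _ _ _ uV1 u'V1 xV1 cu cu' xe xe').
have [ue _] := chosen_edge cu; have [u'e' _] := chosen_edge cu'.
have eE := subsetP chosen_edges_sub e eN; have e'E := subsetP chosen_edges_sub e' e'N.
move: cu cu'; rewrite (edge_V1_uniq eE uV1 xV1 ue xe) (edge_V1_uniq e'E u'V1 xV1 u'e' xe').
by move=> -> [].
Qed.

End Choice.

Lemma card_matching t : is_matching E t -> #|t| = #|matched t V1|.
Proof.
move=> tm; have tE := tm.1.
have t_img : t = [set odflt set0 (mate t x) | x in matched t V1].
  apply/setP => e; apply/idP/imsetP => [et|[x]].
    have [x xV1 xe] := edge_V1_endpoint (subsetP tE e et).
    by exists x; rewrite ?inE ?xV1 (mate_matching tm et xe).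
  by rewrite inE => /andP[_]; case hx: (mate t x) => [e'|] // _ ->; case: (mate_Some hx).
rewrite {1}t_img; apply: card_in_imset => x y; rewrite !inE => /andP[xV1 +] /andP[yV1].
case hx: (mate t x) => [ex|] //; case hy: (mate t y) => [ey|] // _ _ /= exy.
have [ext xe] := mate_Some hx; have [_ ye] := mate_Some hy; rewrite -exy in ye.
exact: edge_V1_uniq (subsetP tE ex ext) xV1 yV1 xe ye.
Qed.

Lemma mate_nu_meet A B v : A \subset E -> B \subset E -> v \in V1 ->
  mate (nu_meet V1 pref A B) v = pmax (pref v) (mate A v) (mate B v).
Proof.
by move=> AE BE; rewrite nu_meetE; apply: (mate_chosen_edges _ AE BE) => u; apply: pmax_either.
Qed.

Lemma mate_nu_join A B v : A \subset E -> B \subset E -> v \in V1 ->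
  mate (nu_join V1 pref A B) v = pmin (pref v) (mate A v) (mate B v).
Proof.
by move=> AE BE; rewrite nu_joinE; apply: (mate_chosen_edges _ AE BE) => u; apply: pmin_either.
Qed.

Lemma nu_meet_sub A B : A \subset E -> B \subset E -> nu_meet V1 pref A B \subset E.
Proof.
by move=> AE BE; rewrite nu_meetE; apply: (chosen_edges_sub _ AE BE) => u; apply: pmax_either.
Qed.

Lemma nu_join_sub A B : A \subset E -> B \subset E -> nu_join V1 pref A B \subset E.
Proof.
by move=> AE BE; rewrite nu_joinE; apply: (chosen_edges_sub _ AE BE) => u; apply: pmin_either.
Qed.

(* If u picks its mu-edge e and u' its sigma-edge e' in the meet and both end at
   w, then stability of sigma makes w weakly prefer e' to e, while stability of
   mu makes w strictly prefer e to e'. *)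
Lemma stable_cross mu sigma e e' u u' w : stable mu -> stable sigma ->
  e \in mu -> e' \in sigma -> e = [set u; w] -> e' = [set u'; w] ->
  pref u (Some e) (mate sigma u) -> ~~ pref u' (mate mu u') (Some e') -> e = e'.
Proof.
move=> smu ssig em e's ee e'e pu npu'.
have [mum sigm] := (stable_matching smu, stable_matching ssig).
have we : w \in e by rewrite ee set22.
have we' : w \in e' by rewrite e'e set22.
case: (boolP (e \in sigma)) => es; first exact: matching_edges_eq sigm es e's we we'.
case: (boolP (e' \in mu)) => e'm; first exact: matching_edges_eq mum em e'm we we'.
have eE := subsetP mum.1 e em; have e'E := subsetP sigm.1 e' e's.
have u'e' : u' \in e' by rewrite e'e set21.
have su' : strict_pref pref u' (Some e') (mate mu u').
  by rewrite /strict_pref npu' andbT (pref_totalN (dom_mate u' mum.1) (dom_edge e'E u'e')).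
have := stable_pref_edge ssig eE es ee pu.
have /andP[_] := stable_strict_pref_edge smu e'E e'm e'e su'.
by rewrite (mate_matching sigm e's we') (mate_matching mum em we) => /negbTE->.
Qed.

Lemma join_of_meet mu sigma e v w : stable mu -> stable sigma -> e = [set v; w] ->
  pmax (pref w) (mate mu w) (mate sigma w) = Some e ->
  pmin (pref v) (mate mu v) (mate sigma v) = Some e.
Proof.
move=> smu ssig ee; have [mum sigm] := (stable_matching smu, stable_matching ssig).
have ve : v \in e by rewrite ee set21.
have ew : e = [set w; v] by rewrite ee setUC.
rewrite /pmax /pmin; case: ifP => pw hw.
  have [em we] := mate_Some hw; have eE := subsetP mum.1 e em.
  rewrite (mate_matching mum em ve).
  case: (boolP (e \in sigma)) => es; first by rewrite (mate_matching sigm es ve); case: ifP.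
  by rewrite (stable_pref_edge ssig eE es ew) // -hw.
have [es we] := mate_Some hw; have eE := subsetP sigm.1 e es.
rewrite (mate_matching sigm es ve).
case: (boolP (e \in mu)) => em; first by rewrite (mate_matching mum em ve); case: ifP.
have sw : strict_pref pref w (Some e) (mate mu w).
  by rewrite /strict_pref -hw pw andbT (pref_totalN (dom_mate w mum.1) (dom_mate w sigm.1)) ?pw.
by have /andP[_ /negbTE->] := stable_strict_pref_edge smu eE em ew sw.
Qed.

End Side.

Lemma valid_instance_setC V1 : valid_instance V1 E E1 pref -> valid_instance (~: V1) E E1 pref.
Proof.
case=> bip E1E prefs; split=> // e /bip[x [y [xV1 yV1 ->]]].
by exists y, x; rewrite !inE xV1 yV1 setUC.
Qed.

Lemma card_matched_setC V1 t : valid_instance V1 E E1 pref -> is_matching E t ->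
  #|matched t (~: V1)| = #|matched t V1|.
Proof.
by move=> inst tm; rewrite -(card_matching (valid_instance_setC inst) tm) (card_matching inst tm).
Qed.

(* Rural hospitals: K matches more of V1 and fewer of V2 than t, and both
   matchings match as many vertices of V1 as of V2. *)
Lemma matched_dominated V1 K t : valid_instance V1 E E1 pref ->
  is_matching E K -> stable t -> {in V1, forall v, pref v (mate K v) (mate t v)} ->
  matched K V1 = matched t V1 /\ matched K (~: V1) = matched t (~: V1).
Proof.
move=> inst Km st Kt.
have sub1 : matched t V1 \subset matched K V1.
  apply/subsetP => v; rewrite !inE => /andP[vV1 tv]; rewrite vV1 /=.
  apply: contra tv => /eqP Kv; apply/eqP.
  by apply: (pref_None inst (dom_mate v (stable_sub st))); rewrite -Kv; apply: Kt.
have sub2 : matched K (~: V1) \subset matched t (~: V1).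
  apply/subsetP => w; rewrite !inE => /andP[wV1]; rewrite wV1 /=.
  case hw: (mate K w) => [e|] // _; have [eK we] := mate_Some hw.
  have eE := subsetP Km.1 e eK; have [v vV1 ve] := edge_V1_endpoint inst eE.
  apply: (stable_matched_end inst st eE (edge_pair inst eE vV1 wV1 ve we)).
  by rewrite -(mate_matching Km eK ve); apply: Kt.
have cK := card_matched_setC inst Km; have ct := card_matched_setC inst (stable_matching st).
split; apply/eqP; [rewrite eq_sym|]; rewrite eqEcard ?sub1 ?sub2 /=.
  by rewrite -cK -ct subset_leq_card.
by rewrite cK ct subset_leq_card.
Qed.

Section Meet.
Variables (V1 : {set V}) (mu sigma : {set {set V}}).
Hypotheses (inst : valid_instance V1 E E1 pref) (smu : stable mu) (ssig : stable sigma).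
Local Notation M := (nu_meet V1 pref mu sigma).

Lemma nu_meet_matching : is_matching E M.
Proof.
have [mum sigm] := (stable_matching smu, stable_matching ssig).
rewrite nu_meetE; apply: (chosen_edges_matching inst _ mum.1 sigm.1).
  by move=> u; apply: pmax_either.
move=> u u' e e' w uV1 u'V1 wV1.
have endpoints f z : mate mu z = Some f \/ mate sigma z = Some f -> z \in V1 -> w \in f ->
    f = [set z; w].
  move=> hz zV1 w_f; have [fE zf] : f \in E /\ z \in f.
    case: hz => /mate_Some[ft zf]; split=> //.
      exact: subsetP mum.1 f ft.
    exact: subsetP sigm.1 f ft.
  exact: (edge_pair inst fE zV1 wV1 zf w_f).
rewrite /pmax; case: ifP => pu cu; case: ifP => pu' cu' we we'.
- exact: matching_edges_eq mum (mate_Some cu).1 (mate_Some cu').1 we we'.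
- apply: (stable_cross inst smu ssig (mate_Some cu).1 (mate_Some cu').1
           (endpoints _ _ (or_introl cu) uV1 we) (endpoints _ _ (or_intror cu') u'V1 we'));
    by rewrite -?cu -?cu' ?pu'.
- apply: esym; apply: (stable_cross inst smu ssig (mate_Some cu').1 (mate_Some cu).1
           (endpoints _ _ (or_introl cu') u'V1 we') (endpoints _ _ (or_intror cu) uV1 we));
    by rewrite -?cu -?cu' ?pu.
- exact: matching_edges_eq sigm (mate_Some cu).1 (mate_Some cu').1 we we'.
Qed.

Lemma nu_meet_ge v : v \in V1 ->
  pref v (mate M v) (mate mu v) && pref v (mate M v) (mate sigma v).
Proof.
move=> vV1; have [muE sigE] := (stable_sub smu, stable_sub ssig).
rewrite mate_nu_meet //.
by apply: (pmax_ge (pref_trans inst (v:=v)) (pref_total inst (v:=v))); apply: dom_mate.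
Qed.

Lemma nu_meet_matched t : stable t -> {in V1, forall v, pref v (mate M v) (mate t v)} ->
  matched M V1 = matched t V1 /\ matched M (~: V1) = matched t (~: V1).
Proof. exact: matched_dominated inst nu_meet_matching. Qed.

Lemma stable_matched_eq : matched mu V1 = matched sigma V1.
Proof.
rewrite -(nu_meet_matched smu _).1 ?(nu_meet_matched ssig _).1 // => v /nu_meet_ge/andP[] //.
Qed.

Lemma nu_meet_mate_setC w : w \notin V1 -> mate M w = mate mu w \/ mate M w = mate sigma w.
Proof.
move=> wV1; have [mum sigm] := (stable_matching smu, stable_matching ssig).
case h: (mate M w) => [e|].
  have [eM we] := mate_Some h; move: eM; rewrite nu_meetE => /chosen_edgesP[u _].
  case/(chosen_edge (fun u => pmax_either (pref u) (mate mu u) (mate sigma u))) => _ [em|es].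
    by left; rewrite (mate_matching mum em we).
  by right; rewrite (mate_matching sigm es we).
left; have : w \notin matched M (~: V1) by rewrite inE h eqxx andbF.
rewrite (nu_meet_matched smu _).2; last by move=> v /nu_meet_ge/andP[].
by rewrite !inE wV1 /= negbK => /eqP.
Qed.

Lemma nu_meet_stable : stable M.
Proof.
apply: (nu_stable_dominating inst nu_meet_matching) => e eE eM.
have [v [w [vV1 wV1 ee]]] := edge_shape inst eE.
have [t [st Mt tw]] : exists t, [/\ stable t,
    {in V1, forall v, pref v (mate M v) (mate t v)} & mate M w = mate t w].
  case: (nu_meet_mate_setC wV1) => ?; [exists mu | exists sigma]; split=> //.
    by move=> u /nu_meet_ge/andP[].
  by move=> u /nu_meet_ge/andP[].
have we : w \in e by rewrite ee set22.
exists t => //; split.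
  apply: contra eM => et; have := mate_matching (stable_matching st) et we.
  by rewrite -tw => /mate_Some[].
move=> z; rewrite {1}ee => /set2P[->|->]; first exact: Mt.
by rewrite tw; apply: (r_refl (pref_total inst (v:=w))); apply: dom_mate (stable_sub st).
Qed.

End Meet.

Section Join.
Variables (V1 : {set V}) (mu sigma : {set {set V}}).
Hypotheses (inst : valid_instance V1 E E1 pref) (smu : stable mu) (ssig : stable sigma).

Lemma nu_join_meet_setC : nu_join V1 pref mu sigma = nu_meet (~: V1) pref mu sigma.
Proof.
have inst' := valid_instance_setC inst.
have [muE sigE] := (stable_sub smu, stable_sub ssig).
have meet_sub_join : nu_meet (~: V1) pref mu sigma \subset nu_join V1 pref mu sigma.
  apply/subsetP => e; rewrite nu_meetE nu_joinE => /chosen_edgesP[w + hw].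
  rewrite inE => wV1; have [we eE] : w \in e /\ e \in E.
    case: (chosen_edge (fun u => pmax_either (pref u) (mate mu u) (mate sigma u)) hw).
    by move=> ? [/(subsetP muE)|/(subsetP sigE)].
  have [v vV1 ve] := edge_V1_endpoint inst eE.
  apply/chosen_edgesP; exists v => //.
  exact: (join_of_meet inst smu ssig (edge_pair inst eE vV1 wV1 ve we) hw).
apply/eqP; rewrite eq_sym eqEcard meet_sub_join /=.
rewrite (card_matching inst' (nu_meet_matching inst' smu ssig)).
rewrite (nu_meet_matched inst' smu ssig smu _).1; last first.
  by move=> w /(nu_meet_ge inst' smu ssig)/andP[].
rewrite (card_matched_setC inst (stable_matching smu)) nu_joinE.
have := card_chosen_edges V1 (fun u => pmin_either (pref u) (mate mu u) (mate sigma u)).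
by rewrite -(stable_matched_eq inst smu ssig) setUid.
Qed.

Lemma nu_join_stable : stable (nu_join V1 pref mu sigma).
Proof. by rewrite nu_join_meet_setC; apply: nu_meet_stable (valid_instance_setC inst) smu ssig. Qed.

End Join.

Section Laws.
Variables (V1 : {set V}) (A B C : {set {set V}}).
Hypotheses (inst : valid_instance V1 E E1 pref)
  (AE : A \subset E) (BE : B \subset E) (CE : C \subset E).
Local Notation "X === Y" := (nu_equiv V1 pref X Y) (at level 70).
Local Notation "X /\' Y" := (nu_meet V1 pref X Y) (at level 40, left associativity).
Local Notation "X \/' Y" := (nu_join V1 pref X Y) (at level 40, left associativity).

Lemma nu_equiv_pointwise X Y :
  (forall v, v \in V1 -> peq (pref v) (mate X v) (mate Y v)) -> X === Y.
Proof. by move=> XY v /XY/andP. Qed.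

Ltac sub_E := repeat first [assumption | apply: nu_meet_sub | apply: nu_join_sub].
Let tr v : forall x y z,
    dom v x -> dom v y -> dom v z -> pref v x y -> pref v y z -> pref v x z :=
  @pref_trans V1 inst v.
Let tot v : forall x y, dom v x -> dom v y -> pref v x y || pref v y x :=
  @pref_total V1 inst v.

Ltac pointwise law :=
  apply: nu_equiv_pointwise => v vV1;
  rewrite !(mate_nu_meet inst, mate_nu_join inst); try sub_E;
  match goal with |- is_true (peq (pref ?u) _ _) =>
    by apply (law _ _ _ (@tr u) (@tot u)); apply: dom_mate
  end.

Lemma nu_meet_equiv A' B' : A' \subset E -> B' \subset E ->
  A === A' -> B === B' -> A /\' B === A' /\' B'.
Proof.
move=> A'E B'E eqA eqB; apply: nu_equiv_pointwise => v vV1; rewrite !mate_nu_meet //.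
apply: (pmax_peq (@tr v) (@tot v) (dom_mate v AE) (dom_mate v BE)
               (dom_mate v A'E) (dom_mate v B'E)).
  by apply/andP; apply: eqA.
by apply/andP; apply: eqB.
Qed.

Lemma nu_join_equiv A' B' : A' \subset E -> B' \subset E ->
  A === A' -> B === B' -> A \/' B === A' \/' B'.
Proof.
move=> A'E B'E eqA eqB; apply: nu_equiv_pointwise => v vV1; rewrite !mate_nu_join //.
apply: (pmin_peq (@tr v) (@tot v) (dom_mate v AE) (dom_mate v BE)
               (dom_mate v A'E) (dom_mate v B'E)).
  by apply/andP; apply: eqA.
by apply/andP; apply: eqB.
Qed.

Lemma nu_meetxx : A /\' A === A. Proof. pointwise pmaxxx. Qed.
Lemma nu_joinxx : A \/' A === A. Proof. pointwise pminxx. Qed.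
Lemma nu_meetC : A /\' B === B /\' A. Proof. pointwise pmaxC. Qed.
Lemma nu_joinC : A \/' B === B \/' A. Proof. pointwise pminC. Qed.
Lemma nu_meetA : A /\' (B /\' C) === A /\' B /\' C. Proof. pointwise pmaxA. Qed.
Lemma nu_joinA : A \/' (B \/' C) === A \/' B \/' C. Proof. pointwise pminA. Qed.
Lemma nu_meet_absorb : A /\' (A \/' B) === A. Proof. pointwise pmax_pminK. Qed.
Lemma nu_join_absorb : A \/' (A /\' B) === A. Proof. pointwise pmin_pmaxK. Qed.
Lemma nu_meetUr : A /\' (B \/' C) === (A /\' B) \/' (A /\' C). Proof. pointwise pmax_pminr. Qed.
Lemma nu_joinIr : A \/' (B /\' C) === (A \/' B) /\' (A \/' C). Proof. pointwise pmin_pmaxr. Qed.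

End Laws.
End NUStableLattice.

Theorem theorem5p5 (V : finType) (V1 : {set V}) (E E1 : {set {set V}})
  (pref : V -> rel (option {set V})) :
  valid_instance V1 E E1 pref ->
  let S := nu_stable E E1 pref in
  let eqv := nu_equiv V1 pref in
  let mt := nu_meet V1 pref in
  let jn := nu_join V1 pref in
  (forall mu sigma, S mu -> S sigma -> S (mt mu sigma) /\ S (jn mu sigma)) /\
  (forall mu mu' sigma sigma', S mu -> S mu' -> S sigma -> S sigma' ->
     eqv mu mu' -> eqv sigma sigma' ->
     eqv (mt mu sigma) (mt mu' sigma') /\ eqv (jn mu sigma) (jn mu' sigma')) /\
  (forall mu, S mu -> eqv (mt mu mu) mu /\ eqv (jn mu mu) mu) /\
  (forall mu sigma, S mu -> S sigma ->
     eqv (mt mu sigma) (mt sigma mu) /\ eqv (jn mu sigma) (jn sigma mu)) /\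
  (forall mu sigma tau, S mu -> S sigma -> S tau ->
     eqv (mt mu (mt sigma tau)) (mt (mt mu sigma) tau) /\
     eqv (jn mu (jn sigma tau)) (jn (jn mu sigma) tau)) /\
  (forall mu sigma, S mu -> S sigma ->
     eqv (mt mu (jn mu sigma)) mu /\ eqv (jn mu (mt mu sigma)) mu) /\
  (forall mu sigma tau, S mu -> S sigma -> S tau ->
     eqv (mt mu (jn sigma tau)) (jn (mt mu sigma) (mt mu tau)) /\
     eqv (jn mu (mt sigma tau)) (mt (jn mu sigma) (jn mu tau))).
Proof.
move=> inst S eqv mt jn.
have sub t : S t -> t \subset E by exact: stable_sub.
split=> [mu sigma smu ssig|].
  by split; [apply: (nu_meet_stable inst) | apply: (nu_join_stable inst)].
split=> [mu mu' sigma sigma' /sub ? /sub ? /sub ? /sub ? e1 e2|].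
  by split; [apply: (nu_meet_equiv inst) | apply: (nu_join_equiv inst)].
split=> [mu /sub ?|].
  by split; [apply: (nu_meetxx inst) | apply: (nu_joinxx inst)].
split=> [mu sigma /sub ? /sub ?|].
  by split; [apply: (nu_meetC inst) | apply: (nu_joinC inst)].
split=> [mu sigma tau /sub ? /sub ? /sub ?|].
  by split; [apply: (nu_meetA inst) | apply: (nu_joinA inst)].
split=> [mu sigma /sub ? /sub ?|].
  by split; [apply: (nu_meet_absorb inst) | apply: (nu_join_absorb inst)].
move=> mu sigma tau /sub ? /sub ? /sub ?.
by split; [apply: (nu_meetUr inst) | apply: (nu_joinIr inst)].
Qed.
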